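(* Let $n\ge 5$ and let $G$ be a tree on $n$ vertices with $G\not\cong P_n$. Then $\mathrm{irr}_t(G)\ge 4n-10$. Equality holds if and only if the degree sequence of $G$ is $(3,2,\ldots,2,1,1,1)$, i.e. $G$ has exactly one vertex of degree $3$, exactly $n-4$ vertices of degree $2$ and exactly $3$ vertices of degree $1$.
   Context: For a graph $G=(V,E)$ and $w\in V$, $d_G(w)$ is the degree of $w$. The total irregularity is $\mathrm{irr}_t(G)=\frac12\sum_{x,y\in V}|d_G(x)-d_G(y)|$, where the sum runs over all ordered pairs of vertices. $P_n$ is the path on $n$ vertices. Degree sequences are listed in nonincreasing order. *)

From mathcomp Require Import all_boot.
Set Implicit Arguments. Unset Strict Implicit. Unset Printing Implicit Defensive.

Definition simple_graph n (e : rel 'I_n) : Prop :=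
  irreflexive e /\ symmetric e.

Definition deg n (e : rel 'I_n) (w : 'I_n) : nat := #|[set y | e w y]|.

Definition nedges n (e : rel 'I_n) : nat :=
  #|[set p : 'I_n * 'I_n | (p.1 < p.2) && e p.1 p.2]|.

Definition connected_graph n (e : rel 'I_n) : Prop :=
  forall x y : 'I_n, connect e x y.

Definition is_tree n (e : rel 'I_n) : Prop :=
  simple_graph e /\ connected_graph e /\ nedges e = n.-1.

Definition path_rel n : rel 'I_n := fun i j => (i.+1 == j) || (j.+1 == i).

Definition isomorphic n (e1 e2 : rel 'I_n) : Prop :=
  exists f : 'I_n -> 'I_n, bijective f /\ forall x y, e1 x y = e2 (f x) (f y).

Definition natdist (a b : nat) : nat := (a - b) + (b - a).

(* total irregularity: (1/2) sum over ordered pairs |d(x) - d(y)|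
   (the double sum is always even, so nat division is exact) *)
Definition irr_t n (e : rel 'I_n) : nat :=
  (\sum_(x : 'I_n) \sum_(y : 'I_n) natdist (deg e x) (deg e y)) %/ 2.

Definition ndeg n (e : rel 'I_n) (k : nat) : nat := #|[set w | deg e w == k]|.

From mathcomp Require Import all_boot zify.
Set Implicit Arguments. Unset Strict Implicit. Unset Printing Implicit Defensive.

(* Let L and N be the numbers of vertices of degree 1 and 2, H the number of
   vertices of degree at least 3 and E the sum of d(v) - 2 over the latter.
   Grouping the pairs of vertices by degree class gives
     irr_t = L N + L (E + H) + N E + (irregularity among high vertices),
   and the handshake lemma for a tree gives L = E + 2.  A tree that is not a
   path has H >= 1 (a connected graph of maximum degree 2 with a leaf is a
   path: grow a path greedily from the leaf), and always E >= H.  Under these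
   constraints L N + L (E + H) + N E >= 4n - 10, with equality iff E = H = 1,
   i.e. iff the degree sequence is (3, 2, ..., 2, 1, 1, 1). *)

Lemma handshake n (e : rel 'I_n) : simple_graph e -> \sum_x deg e x = 2 * nedges e.
Proof.
case=> e_irr e_sym.
have nedgesE : nedges e = \sum_(x : 'I_n) \sum_(y : 'I_n | (x < y) && e x y) 1.
  by rewrite /nedges -sum1dep_card (pair_big_dep xpredT (fun x y : 'I_n => (x < y) && e x y)).
have back_edges : \sum_(x : 'I_n) \sum_(y : 'I_n | e x y && ~~ (x < y)) 1 = nedges e.
  rewrite nedgesE (exchange_big_dep xpredT) //=; apply: eq_bigr => y _.
  apply: eq_bigl => x; rewrite e_sym -leqNgt leq_eqVlt.
  by case: ltngtP => [_|_|/val_inj ->]; rewrite ?e_irr ?andbT ?andbF.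
rewrite mul2n -addnn -{1}back_edges nedgesE -big_split /=; apply: eq_bigr => x _.
rewrite /deg -sum1dep_card (bigID (fun y : 'I_n => x < y)) addnC; congr (_ + _).
by apply: eq_bigl => y; rewrite andbC.
Qed.

Lemma deg_gt0 n (e : rel 'I_n) : connected_graph e -> 1 < n -> forall x, 0 < deg e x.
Proof.
move=> e_con n_gt1 x.
have [y] : exists y, y \in [set~ x] by apply/card_gt0P; rewrite cardsC1 card_ord; lia.
rewrite !inE => y_neq_x.
case/connectP: (e_con x y) => [[|z p]] /= => [_ y_eq_x|/andP [exz _] _].
  by rewrite y_eq_x eqxx in y_neq_x.
by apply/card_gt0P; exists z; rewrite inE.
Qed.

Lemma mem_nbhd_of_uniq (T : finType) (e : rel T) x (s : seq T) z :
  uniq s -> (forall y, y \in s -> e x y) -> #|[set y | e x y]| <= size s -> e x z -> z \in s.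
Proof.
move=> s_uniq s_nbr card_le exz.
have sub : [set y in s] \subset [set y | e x y].
  by apply/subsetP => y; rewrite !inE => /s_nbr.
have /eqP eq_nbhd : [set y in s] == [set y | e x y].
  by rewrite -(geq_leqif (subset_leqif_cards sub)) [X in _ <= X]cardsE (card_uniqP s_uniq).
by have := in_set (mem s) z; rewrite eq_nbhd inE exz.
Qed.

Section MaxDegreeTwo.
Variables (T : finType) (e : rel T).
Hypotheses (e_irr : irreflexive e) (e_sym : symmetric e).
Hypothesis deg_le2 : forall x, #|[set y | e x y]| <= 2.
Variable v0 : T.
Hypothesis v0_leaf : #|[set y | e v0 y]| <= 1.

(* For i = 0 the second alternative degenerates to z = v0. *)
Lemma path_nth_nbr (t : seq T) i z : uniq (v0 :: t) -> path e v0 t ->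
    i.+1 < size (v0 :: t) -> e (nth v0 (v0 :: t) i) z ->
  z = nth v0 (v0 :: t) i.+1 \/ z = nth v0 (v0 :: t) i.-1.
Proof.
set s := v0 :: t => s_uniq s_path lt_i_s hz.
have step j : j.+1 < size s -> e (nth v0 s j) (nth v0 s j.+1).
  by move=> lt_j; apply: (pathP v0 s_path).
have s_leaf : #|[set y | e (nth v0 s 0) y]| <= 1 by [].
clearbody s; case: i lt_i_s hz => [|i] lt_i_s hz.
  have : z \in [:: nth v0 s 1].
    apply: (@mem_nbhd_of_uniq _ _ _ [:: nth v0 s 1] _ _ _ s_leaf hz) => // y.
    by rewrite inE => /eqP ->; apply: step.
  by rewrite inE => /eqP; left.
have : z \in [:: nth v0 s i.+2; nth v0 s i].
  apply: (@mem_nbhd_of_uniq _ _ _ [:: nth v0 s i.+2; nth v0 s i] _ _ _ (deg_le2 _) hz).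
    by rewrite /= inE andbT nth_uniq //; [apply/eqP; lia | exact: ltnW (ltnW lt_i_s)].
  by move=> y; rewrite !inE => /orP [] /eqP ->; [|rewrite e_sym]; apply: step; lia.
by rewrite !inE => /orP [] /eqP; [left|right].
Qed.

Definition extend_path (t : seq T) : seq T :=
  if [pick y | e (last v0 t) y && (y \notin v0 :: t)] is Some y then rcons t y else t.

Definition greedy_path k := iter k extend_path [::].

Lemma greedy_path_uniq_path k : uniq (v0 :: greedy_path k) && path e v0 (greedy_path k).
Proof.
elim: k => [//|k]; rewrite /greedy_path iterS -/(greedy_path k) /extend_path.
case: pickP => [y /andP [ey y_new] /andP [t_uniq t_path]|_ //].
by rewrite -rcons_cons rcons_uniq rcons_path y_new t_uniq t_path ey.
Qed.

Hypothesis e_connected : forall x y, connect e x y.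

Lemma maximal_path_covers (t : seq T) : uniq (v0 :: t) -> path e v0 t ->
  (forall y, e (last v0 t) y -> y \in v0 :: t) -> forall y, y \in v0 :: t.
Proof.
move=> t_uniq t_path stuck.
have forward x y : e x y -> x \in v0 :: t -> y \in v0 :: t.
  move=> exy x_in; rewrite -(nth_index v0 x_in) in exy.
  have le_x : index x (v0 :: t) <= size t by rewrite -ltnS index_mem.
  case: (ltnP (index x (v0 :: t)) (size t)) => [lt_x|ge_x].
    case: (path_nth_nbr t_uniq t_path lt_x exy) => ->; apply: mem_nth => //.
    exact: leq_trans (leq_pred _) le_x.
  apply: stuck; rewrite (last_nth v0) -(_ : index x (v0 :: t) = size t) //.
  by apply/eqP; rewrite eqn_leq le_x.
have closed_t : closed e (mem (v0 :: t)).
  by move=> x y exy; apply/idP/idP => /=; apply: forward; rewrite // e_sym.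
by move=> y; rewrite -(closed_connect closed_t (e_connected v0 y)) mem_head.
Qed.

Lemma size_greedy_path k : k < #|T| -> size (greedy_path k) = k.
Proof.
elim: k => [//|k IHk] lt_k.
move: (greedy_path_uniq_path k); rewrite /greedy_path iterS -/(greedy_path k) /extend_path.
case: pickP => [y _ _|no_ext /andP [t_uniq t_path]]; first by rewrite size_rcons IHk //; lia.
have covers : forall y, y \in v0 :: greedy_path k.
  apply: maximal_path_covers => // y ey.
  by have := no_ext y; rewrite /= ey => /negbFE.
have := uniq_leq_size (enum_uniq T) (fun y _ => covers y).
rewrite -cardE /= IHk ?(ltnW lt_k) // => le_T.
by have := leq_ltn_trans le_T lt_k; rewrite ltnn.
Qed.

Definition spanning_path := v0 :: greedy_path #|T|.-1.

Lemma size_spanning_path : size spanning_path = #|T|.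
Proof.
have T_gt0 : 0 < #|T| by apply/card_gt0P; exists v0.
by rewrite /= size_greedy_path ?prednK ?ltn_predL.
Qed.

Lemma uniq_spanning_path : uniq spanning_path.
Proof. by case/andP: (greedy_path_uniq_path #|T|.-1). Qed.

Lemma spanning_path_step i : i.+1 < #|T| ->
  e (nth v0 spanning_path i) (nth v0 spanning_path i.+1).
Proof.
move=> lt_i; case/andP: (greedy_path_uniq_path #|T|.-1) => _ /(pathP v0); apply.
by rewrite -ltnS -[(size _).+1]/(size spanning_path) size_spanning_path.
Qed.

Lemma spanning_path_no_chord i j : j < #|T| -> i.+1 < j ->
  ~~ e (nth v0 spanning_path i) (nth v0 spanning_path j).
Proof.
move=> lt_j lt_ij; apply/negP => hij.
case/andP: (greedy_path_uniq_path #|T|.-1) => s_uniq s_path.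
have lt_i : i.+1 < size spanning_path by rewrite size_spanning_path; lia.
by case: (path_nth_nbr s_uniq s_path lt_i hij) => /eqP;
  rewrite -/spanning_path nth_uniq ?uniq_spanning_path ?size_spanning_path //; lia.
Qed.

Lemma spanning_path_edge i j : i < #|T| -> j < #|T| ->
  e (nth v0 spanning_path i) (nth v0 spanning_path j) = (i.+1 == j) || (j.+1 == i).
Proof.
case: eqP => [<- _ /spanning_path_step -> //|ne_ij].
case: eqP => [<- /spanning_path_step|ne_ji]; first by rewrite e_sym => ->.
move=> lt_i lt_j; apply/negbTE; case: (ltngtP i j) => [lt_ij|lt_ji|<-].
- by apply: spanning_path_no_chord; lia.
- by rewrite e_sym; apply: spanning_path_no_chord; lia.
- by rewrite e_irr.
Qed.

End MaxDegreeTwo.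

Lemma max_deg2_isomorphic_path n (e : rel 'I_n) (v0 : 'I_n) :
  simple_graph e -> connected_graph e -> (forall x, deg e x <= 2) -> deg e v0 <= 1 ->
  isomorphic e (@path_rel n).
Proof.
move=> [e_irr e_sym] e_con deg_le2 v0_leaf.
pose g (i : 'I_n) := nth v0 (spanning_path e v0) i.
have size_s : size (spanning_path e v0) = n.
  by rewrite (size_spanning_path e_sym deg_le2 v0_leaf e_con) card_ord.
have g_inj : injective g.
  by move=> i j /eqP; rewrite nth_uniq ?uniq_spanning_path ?size_s // => /eqP /val_inj.
have [f gK fK] := injF_bij g_inj.
exists f; split; first by exists g.
move=> x y; rewrite -{1}[x]fK -{1}[y]fK.
by rewrite (spanning_path_edge e_irr e_sym deg_le2 v0_leaf e_con) ?card_ord.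
Qed.

Section DegreeClasses.
Variables (I : finType) (d : I -> nat).
Hypothesis d_gt0 : forall x, 0 < d x.

Definition nclass k := #|[set x | d x == k]|.
Definition nhigh := #|[set x | 2 < d x]|.
Definition excess := \sum_(x | 2 < d x) (d x - 2).
Definition high_irr := \sum_(x | 2 < d x) \sum_(y | 2 < d y) natdist (d x) (d y).

Lemma sum_by_class (F : I -> nat) :
  \sum_x F x = \sum_(x | d x == 1) F x + \sum_(x | d x == 2) F x + \sum_(x | 2 < d x) F x.
Proof.
rewrite (bigID (fun x => d x == 1)) -addnA; congr (_ + _).
rewrite (bigID (fun x => d x == 2)); congr (_ + _); apply: eq_bigl => x.
  by case: eqP => // ->.
by have := d_gt0 x; case: (d x) => [|[|[|k]]].
Qed.

Lemma card_by_class : #|I| = nclass 1 + nclass 2 + nhigh.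
Proof. by rewrite /nclass /nhigh -!sum1dep_card -sum_by_class sum1_card. Qed.

Lemma sum_deg_by_class : \sum_x d x = nclass 1 + 2 * nclass 2 + excess + 2 * nhigh.
Proof.
have sum_high : \sum_(x | 2 < d x) d x = excess + 2 * nhigh.
  by rewrite /nhigh -sum1dep_card big_distrr -big_split; apply: eq_bigr => x /=; lia.
rewrite sum_by_class sum_high (eq_bigr (fun=> 1)); last by move=> x /eqP.
rewrite [X in _ + X + _](eq_bigr (fun=> 2)); last by move=> x /eqP.
by rewrite !sum_nat_cond_const /nclass; lia.
Qed.

Lemma nclass1_of_sum_deg : \sum_x d x + 2 = 2 * #|I| -> nclass 1 = excess + 2.
Proof. by rewrite sum_deg_by_class card_by_class; lia. Qed.

Lemma sum_high_pred : \sum_(x | 2 < d x) (d x).-1 = excess + nhigh.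
Proof. rewrite /nhigh -sum1dep_card -big_split; apply: eq_bigr => x /=; lia. Qed.

Lemma nhigh_leqif_excess : nhigh <= excess ?= iff [forall (x | 2 < d x), d x == 3].
Proof.
rewrite /nhigh -sum1dep_card /excess; apply: leqif_sum => x hx.
split; first lia.
by apply/eqP/eqP; lia.
Qed.

Lemma sum_class_const k (F : nat -> nat) :
  \sum_(x | d x == k) F (d x) = nclass k * F k.
Proof. by rewrite -sum_nat_cond_const; apply: eq_bigr => x /eqP ->. Qed.

Lemma sum_natdist_leaf x : d x = 1 -> \sum_y natdist (d x) (d y) = nclass 2 + (excess + nhigh).
Proof.
move=> ->; rewrite sum_by_class !sum_class_const -sum_high_pred muln0 add0n muln1.
by congr (_ + _); apply: eq_bigr => y; rewrite /natdist; lia.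
Qed.

Lemma sum_natdist_deg2 x : d x = 2 -> \sum_y natdist (d x) (d y) = nclass 1 + excess.
Proof.
move=> ->; rewrite sum_by_class !sum_class_const muln0 addn0 muln1.
by congr (_ + _); apply: eq_bigr => y; rewrite /natdist; lia.
Qed.

Lemma sum_natdist_high x : 2 < d x -> \sum_y natdist (d x) (d y) =
  (d x).-1 * nclass 1 + (d x - 2) * nclass 2 + \sum_(y | 2 < d y) natdist (d x) (d y).
Proof.
by move=> hx; rewrite sum_by_class !sum_class_const /natdist; congr (_ + _ + _); lia.
Qed.

Lemma sum_natdist_by_class : \sum_x \sum_y natdist (d x) (d y) =
  2 * (nclass 1 * nclass 2 + nclass 1 * (excess + nhigh) + nclass 2 * excess) + high_irr.
Proof.
rewrite sum_by_class (eq_bigr _ (fun x hx => sum_natdist_leaf (eqP hx))).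
rewrite [X in _ + X + _](eq_bigr _ (fun x hx => sum_natdist_deg2 (eqP hx))).
rewrite (eq_bigr _ (fun x hx => sum_natdist_high hx)) !big_split /= -!big_distrl /= sum_high_pred.
rewrite !sum_nat_cond_const -/(nclass 1) -/(nclass 2) -/high_irr /excess.
nia.
Qed.

Lemma nclass3_eq_nhigh : nhigh = excess -> nclass 3 = nhigh.
Proof.
move=> /eqP; rewrite (nhigh_leqif_excess).2 => /forall_inP deg3.
apply: eq_card => x; rewrite !inE.
by apply/eqP/idP => [dx3|/deg3 /eqP //]; rewrite dx3.
Qed.

Lemma high_irr_eq0 : nhigh <= 1 -> high_irr = 0.
Proof.
move=> /card_le1_eqP high_eq; apply: big1 => x hx; apply: big1 => y hy.
by rewrite (high_eq x y) ?inE // /natdist subnn.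
Qed.

End DegreeClasses.

Lemma irr_t_by_class n (e : rel 'I_n) : (forall x, 0 < deg e x) ->
  irr_t e = nclass (deg e) 1 * nclass (deg e) 2
    + nclass (deg e) 1 * (excess (deg e) + nhigh (deg e))
    + nclass (deg e) 2 * excess (deg e) + high_irr (deg e) %/ 2.
Proof. by move=> d_gt0; rewrite /irr_t sum_natdist_by_class // addnC mulnC divnDMl // addnC. Qed.

Lemma tree_nclass1 n (e : rel 'I_n) : 0 < n -> is_tree e -> (forall x, 0 < deg e x) ->
  nclass (deg e) 1 = excess (deg e) + 2.
Proof.
move=> n_gt0 [e_simple [_ e_edges]] d_gt0; apply: nclass1_of_sum_deg => //.
by rewrite handshake // e_edges card_ord; lia.
Qed.

Lemma not_path_nhigh_gt0 n (e : rel 'I_n) : simple_graph e -> connected_graph e ->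
  0 < nclass (deg e) 1 -> ~ isomorphic e (@path_rel n) -> 0 < nhigh (deg e).
Proof.
move=> e_simple e_con /card_gt0P [v0]; rewrite inE => /eqP leaf_v0 not_path.
rewrite lt0n; apply/negP => /eqP /card0_eq no_high; apply: not_path.
apply: (max_deg2_isomorphic_path (v0 := v0)) => // [x|]; last by rewrite leaf_v0.
by rewrite leqNgt; have := no_high x; rewrite !inE => ->.
Qed.

(* [L N + L (E + H) + N E] against [4 n - 10], where L = E + 2 and n = L + N + H. *)
Lemma tree_irr_leqif E N H : 0 < H <= E ->
  4 * (E + 2 + N + H) - 10 <= (E + 2) * N + (E + 2) * (E + H) + N * E ?= iff (E == 1).
Proof.
move=> /andP [H_gt0 H_le]; split; first nia.
apply/eqP/eqP => [|E1]; last by subst; nia.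
case: (ltngtP E 1) => // E_gt1; nia.
Qed.

Theorem theorem6 (n : nat) (e : rel 'I_n) :
  5 <= n -> is_tree e -> ~ isomorphic e (@path_rel n) ->
  4 * n - 10 <= irr_t e /\
  (irr_t e = 4 * n - 10 <->
   [/\ ndeg e 3 = 1, ndeg e 2 = n - 4 & ndeg e 1 = 3]).
Proof.
move=> n_ge5 e_tree not_path; have [e_simple [e_con _]] := e_tree.
have n_gt1 : 1 < n by lia.
have d_gt0 := deg_gt0 e_con n_gt1.
have card_n := card_by_class d_gt0; rewrite card_ord in card_n.
have leaves := tree_nclass1 (ltnW n_gt1) e_tree d_gt0.
have H_gt0 : 0 < nhigh (deg e) by apply: not_path_nhigh_gt0 => //; rewrite leaves addn2.
have [H_le _] := nhigh_leqif_excess (deg e).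
have [bound eq_iff] := tree_irr_leqif (nclass (deg e) 2) (introT andP (conj H_gt0 H_le)).
rewrite /ndeg -!/(nclass (deg e) _) irr_t_by_class // leaves.
set N := nclass (deg e) 2 in card_n bound eq_iff *.
set H := nhigh (deg e) in card_n bound eq_iff H_gt0 H_le *.
set E := excess (deg e) in card_n bound eq_iff H_le *.
have -> : 4 * n - 10 = 4 * (E + 2 + N + H) - 10 by lia.
split; first exact: leq_trans bound (leq_addr _ _).
split => [irr_min | [_ N_eq L_eq]].
- have E1 : E = 1 by apply/eqP; rewrite -eq_iff eqn_leq bound; lia.
  have deg3 : nclass (deg e) 3 = H by apply: nclass3_eq_nhigh; rewrite -/H -/E; lia.
  by split; lia.
- have E1 : E = 1 by lia.
  rewrite high_irr_eq0 ?div0n ?addn0; last by rewrite -/H; lia.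
  by apply/esym/eqP; rewrite eq_iff E1.
Qed.
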